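(* Let $n \in \mathbb{N}$ and let $K \subset \mathbb{C}$ be compact. The mapping $\mathcal{Q}_n: (H^2)^* \rightarrow C(K)$ which takes a function $f$ to $Q_n(1/f)$ is continuous (with the $H^2$ norm topology on $(H^2)^*$ and the uniform topology on $C(K)$).
   Context: $H^2$ is the Hardy space on the unit disc with norm $\|\sum_k a_kz^k\|_{H^2}^2=\sum_k|a_k|^2$, and $(H^2)^*=H^2\setminus\{0\}$. For $f\in (H^2)^*$, the optimal polynomial approximant $Q_n(1/f)$ is the unique polynomial of degree at most $n$ minimizing $\|qf-1\|_{H^2}$ over all polynomials $q$ of degree at most $n$. $C(K)$ is the space of continuous functions on $K$ with the sup norm. *)

From HB Require Import structures.
From mathcomp Require Import all_boot all_order all_algebra.
From mathcomp Require Import complex.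
From mathcomp Require Import all_classical all_reals all_analysis.
Set Implicit Arguments. Unset Strict Implicit. Unset Printing Implicit Defensive.
Import Order.TTheory GRing.Theory Num.Theory.
Import numFieldTopology.Exports numFieldNormedType.Exports.
Local Open Scope ring_scope.
Local Open Scope complex_scope.
Local Open Scope classical_set_scope.

Section H2.
Variable R : realType.

Definition cabs2 (z : R[i]) : R := (complex.Re z) ^+ 2 + (complex.Im z) ^+ 2.

(* An element of H^2 is given by its Taylor coefficient sequence a : nat -> R[i],
   f = sum_k a_k z^k, with sum_k |a_k|^2 < oo. *)
Definition H2 (a : nat -> R[i]) : Prop :=
  cvgn (series (fun k => cabs2 (a k))).

Definition h2norm (a : nat -> R[i]) : R :=
  Num.sqrt (limn (series (fun k => cabs2 (a k)))).

(* (H^2)^* = H^2 \ {0} *)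
Definition H2star (a : nat -> R[i]) : Prop := H2 a /\ exists k, a k != 0.

(* Taylor coefficients of q f - 1, for a polynomial q *)
Definition res_coef (q : {poly R[i]}) (a : nat -> R[i]) (k : nat) : R[i] :=
  \sum_(i < k.+1) q`_i * a (k - i)%N - (k == 0%N)%:R.

Definition is_opa (n : nat) (a : nat -> R[i]) (q : {poly R[i]}) : Prop :=
  (size q <= n.+1)%N /\
  forall p : {poly R[i]}, (size p <= n.+1)%N ->
    h2norm (res_coef q a) <= h2norm (res_coef p a).

Definition Qn (n : nat) (a : nat -> R[i]) : {poly R[i]} :=
  xget 0 [set q | is_opa n a q].

End H2.

(* Sequences are Taylor coefficients: [conv p f] is [p f] and [res_coef p f] is [p f - 1].
   For [f <> 0], [r |-> ||r f||] dominates a multiple of the l^1 norm of the coefficients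
   of [r] on polynomials of degree <= n (compactness of a sphere in finite dimension);
   the same compactness yields the optimal approximants, so [Qn] picks them.
   Let [q = Q_n f], [p = Q_n g] and [d = ||g - f||]. As [q] minimises a quadratic over a
   subspace, ||p f - 1||^2 = ||q f - 1||^2 + ||(p - q) f||^2, and ||q g - 1|| >= ||p g - 1||,
   so ||(p - q) f||^2 is bounded by the changes of ||r f - 1||^2 into ||r g - 1||^2 at
   [r = p, q], which are O(d) since the coefficients of [p] and [q] stay bounded.
   Hence |p - q|_1^2 = O(d), and |(p - q)(z)| <= |p - q|_1 M^n on K, for a bound M >= 1
   of [K]. *)

From HB Require Import structures.
From mathcomp Require Import all_boot all_order all_algebra.
From mathcomp Require Import complex.
From mathcomp Require Import all_classical all_reals all_analysis.
From mathcomp Require Import ring lra.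
From mathcomp Require finmap.
Set Implicit Arguments. Unset Strict Implicit. Unset Printing Implicit Defensive.
Import Order.TTheory GRing.Theory Num.Theory.
Import numFieldTopology.Exports numFieldNormedType.Exports.
Import Normc.
Local Open Scope ring_scope.
Local Open Scope classical_set_scope.
Local Open Scope complex_scope.

Section ComplexModulus.
Variable R : realType.
Local Notation C := R[i].
Implicit Types (x y : C) (t u w : R).

Lemma normcE x : `|x| = (normc x)%:C.
Proof. by case: x => u v; rewrite normc_def. Qed.

Lemma normc_ge0 x : 0 <= normc x.
Proof. by case: x => u v; apply: sqrtr_ge0. Qed.

Lemma cabs2E x : cabs2 x = normc x ^+ 2.
Proof. by case: x => u v; rewrite sqr_sqrtr // addr_ge0 ?sqr_ge0. Qed.

Lemma cabs2_ge0 x : 0 <= cabs2 x.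
Proof. by rewrite cabs2E sqr_ge0. Qed.

Lemma cabs2M x y : cabs2 (x * y) = cabs2 x * cabs2 y.
Proof. by rewrite !cabs2E normcM exprMn. Qed.

Lemma cabs2N x : cabs2 (- x) = cabs2 x.
Proof. by rewrite !cabs2E normcN. Qed.

Lemma cabs2_0 : cabs2 (0 : C) = 0.
Proof. by rewrite cabs2E normc0 expr0n. Qed.

Lemma cabs2D_le x y : cabs2 (x + y) <= 2 * (cabs2 x + cabs2 y).
Proof.
case: x y => [u v] [u' v']; rewrite /cabs2 /=.
have := sqr_ge0 (u - u'); have := sqr_ge0 (v - v'); nra.
Qed.

Lemma cabs2_addZ x y t :
  cabs2 (x + t%:C * y) =
  cabs2 x + t * (cabs2 (x + y) - cabs2 x - cabs2 y) + t ^+ 2 * cabs2 y.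
Proof. by case: x y => [u v] [u' v']; rewrite /cabs2 /=; ring. Qed.

Lemma normcR (t : R) : normc t%:C = `|t|.
Proof. by rewrite /= expr0n /= addr0 sqrtr_sqr. Qed.

Lemma normc_sum_le (I : Type) (r : seq I) (F : I -> C) :
  normc (\sum_(i <- r) F i) <= \sum_(i <- r) normc (F i).
Proof.
elim/big_ind2: _ => // [|x1 x2 y1 y2 le1 le2].
  by rewrite (_ : normc _ = 0) //; exact: normc0.
exact: le_trans (le_normcD _ _) (lerD le1 le2).
Qed.

Lemma normcX (x : C) k : normc (x ^+ k) = normc x ^+ k.
Proof. by apply: complexI; rewrite rmorphXn -!normcE normrX. Qed.

Lemma Re_le_normc u w : `|u| <= normc (u +i* w).
Proof. by rewrite /= -sqrtr_sqr ler_wsqrtr // lerDl sqr_ge0. Qed.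

Lemma Im_le_normc u w : `|w| <= normc (u +i* w).
Proof. by rewrite /= -sqrtr_sqr ler_wsqrtr // lerDr sqr_ge0. Qed.

Lemma normc_le_ReIm u w : normc (u +i* w) <= `|u| + `|w|.
Proof.
rewrite /= -[leRHS]ger0_norm ?addr_ge0 // -sqrtr_sqr ler_wsqrtr //.
rewrite sqrrD !real_normK ?num_real // -addrA lerD2l lerDr mulrn_wge0 // mulr_ge0.
Qed.

End ComplexModulus.

Section H2Space.
Variable R : realType.
Local Notation C := R[i].
Implicit Types (a b : nat -> C) (c x : C) (t : R).

Definition h2sqnorm a : R := limn (series (fun k => cabs2 (a k))).

Lemma h2normE a : h2norm a = Num.sqrt (h2sqnorm a).
Proof. by []. Qed.

Lemma eq_h2norm a b : a =1 b -> h2norm a = h2norm b.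
Proof. by move=> /funext ->. Qed.

Lemma eq_H2 a b : a =1 b -> H2 a -> H2 b.
Proof. by move=> /funext ->. Qed.

Lemma series_cabs2_le a N : H2 a -> series (fun k => cabs2 (a k)) N <= h2sqnorm a.
Proof.
move=> ha; apply: nondecreasing_cvgn_le => // p q pq.
by apply: (@nondecreasing_series _ _ xpredT 0) => // m _ _; apply: cabs2_ge0.
Qed.

Lemma h2sqnorm_ge0 a : H2 a -> 0 <= h2sqnorm a.
Proof. by move=> /(series_cabs2_le 0); apply: le_trans; rewrite /series /= big_geq. Qed.

Lemma cabs2_le_h2sqnorm a k : H2 a -> cabs2 (a k) <= h2sqnorm a.
Proof.
move=> /(series_cabs2_le k.+1); apply: le_trans.
rewrite /series /= big_nat_recr //= lerDr.
by rewrite sumr_ge0 // => i _; apply: cabs2_ge0.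
Qed.

Lemma h2norm_ge0 a : 0 <= h2norm a.
Proof. exact: sqrtr_ge0. Qed.

Lemma sqr_h2norm a : H2 a -> h2norm a ^+ 2 = h2sqnorm a.
Proof. by move=> ha; rewrite sqr_sqrtr // h2sqnorm_ge0. Qed.

Lemma h2norm_gt0 a : H2 a -> (exists k, a k != 0) -> 0 < h2norm a.
Proof.
move=> ha [k]; apply: contraNT; rewrite -leNgt => a_le0.
have a0 : h2sqnorm a = 0.
  by rewrite -sqr_h2norm //; apply/eqP; rewrite sqrf_eq0 eq_le a_le0 h2norm_ge0.
have := cabs2_le_h2sqnorm k ha; rewrite a0 cabs2E => ak_le0.
suff /eq0_normc -> : normc (a k) = 0 by rewrite eqxx.
by apply/eqP; rewrite -sqrf_eq0 eq_le ak_le0 sqr_ge0.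
Qed.

Lemma H2D a b : H2 a -> H2 b -> H2 (fun k => a k + b k).
Proof.
move=> ha hb; apply: (@series_le_cvg _ _ (fun k => 2 * (cabs2 (a k) + cabs2 (b k)))).
- by move=> k; apply: cabs2_ge0.
- by move=> k; rewrite mulr_ge0 // addr_ge0 // cabs2_ge0.
- by move=> k; apply: cabs2D_le.
- exact: is_cvg_seriesZ (is_cvg_seriesD ha hb).
Qed.

Lemma H2Z c a : H2 a -> H2 (fun k => c * a k).
Proof.
by move=> ha; rewrite /H2; under eq_fun do rewrite cabs2M; apply: is_cvg_seriesZ.
Qed.

Lemma h2normZ c a : H2 a -> h2norm (fun k => c * a k) = normc c * h2norm a.
Proof.
move=> ha; rewrite /h2norm; under eq_fun do rewrite cabs2M.
by rewrite (lim_seriesZ _ ha) sqrtrM ?cabs2_ge0 // cabs2E sqrtr_sqr ger0_norm ?normc_ge0.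
Qed.

Lemma H2N a : H2 a -> H2 (fun k => - a k).
Proof. by move=> ha; rewrite /H2; under eq_fun do rewrite cabs2N. Qed.

Lemma h2normN a : h2norm (fun k => - a k) = h2norm a.
Proof. by rewrite /h2norm; under eq_fun do rewrite cabs2N. Qed.

Lemma H2B a b : H2 a -> H2 b -> H2 (fun k => a k - b k).
Proof. by move=> ha hb; apply: H2D ha (H2N hb). Qed.

Lemma h2normBC a b : h2norm (fun k => a k - b k) = h2norm (fun k => b k - a k).
Proof. by rewrite -h2normN; apply: eq_h2norm => k; rewrite opprB. Qed.

Definition delta0 (k : nat) : C := (k == 0%N)%:R.

Lemma delta0_cvg : series (fun k => cabs2 (delta0 k)) @ \oo --> (1 : R).
Proof.
rewrite -cvg_shiftS.
suff -> : [sequence series (fun k => cabs2 (delta0 k)) n.+1]_n = fun=> 1 by apply: cvg_cst.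
apply/funext => N /=; rewrite /series /= big_nat_recl //= big1 => [|k _].
  by rewrite addr0 cabs2E normc1 expr1n.
by rewrite cabs2_0.
Qed.

Lemma H2_delta0 : H2 delta0.
Proof. by apply/cvg_ex; exists 1; apply: delta0_cvg. Qed.

Lemma h2norm_delta0 : h2norm delta0 = 1.
Proof. by rewrite /h2norm (cvg_lim _ delta0_cvg) ?sqrtr1. Qed.

Lemma h2norm0 : h2norm (fun _ : nat => 0 : C) = 0.
Proof.
rewrite (eq_h2norm (b := fun k => 0 * delta0 k)) => [|k]; last by rewrite mul0r.
rewrite h2normZ; last exact: H2_delta0.
by rewrite (_ : normc _ = 0) ?mul0r //; exact: normc0.
Qed.

Definition seq_shift i a k : C := if (i <= k)%N then a (k - i)%N else 0.

Lemma seq_shift_cvg i a : H2 a ->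
  series (fun k => cabs2 (seq_shift i a k)) @ \oo --> h2sqnorm a.
Proof.
move=> ha; rewrite -(cvg_shiftn i).
suff -> : [sequence series (fun k => cabs2 (seq_shift i a k)) (n + i)%N]_n =
  series (fun k => cabs2 (a k)) by apply: ha.
apply/funext => N /=; rewrite /series /= (@big_cat_nat _ _ _ i) ?leq_addl //=.
rewrite big_nat_cond big1 => [|k /andP[/andP[_ ki] _]]; last first.
  by rewrite /seq_shift leqNgt ki cabs2_0.
rewrite add0r -{1}(add0n i) big_addn addnK.
by apply: eq_bigr => k _; rewrite /seq_shift leq_addl addnK.
Qed.

Lemma H2_shift i a : H2 a -> H2 (seq_shift i a).
Proof. by move=> ha; apply/cvg_ex; exists (h2sqnorm a); apply: seq_shift_cvg. Qed.

Lemma h2norm_shift i a : H2 a -> h2norm (seq_shift i a) = h2norm a.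
Proof. by move=> ha; rewrite /h2norm (cvg_lim _ (seq_shift_cvg i ha)). Qed.

End H2Space.
Arguments delta0 {R} k.
Arguments H2_delta0 {R}.
Arguments h2norm_delta0 {R}.

Lemma quad_discr (R : realFieldType) (A B Q : R) : 0 <= Q ->
  (forall t, 0 <= A + t * B + t ^+ 2 * Q) -> B ^+ 2 <= 4 * A * Q.
Proof.
move=> Q_ge0 pos; have [Q0|Q_neq0] := eqVneq Q 0.
  have [->|B_neq0] := eqVneq B 0; first by rewrite Q0 expr0n mulr0.
  have := pos (- (A + 1) / B); rewrite Q0 mulr0 addr0 mulrAC -mulrA divff // mulr1.
  lra.
have Q_gt0 : 0 < Q by rewrite lt_def Q_neq0.
have := pos (- B / (2 * Q)).
have -> : A + - B / (2 * Q) * B + (- B / (2 * Q)) ^+ 2 * Q = A - B ^+ 2 / (4 * Q).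
  by field.
by rewrite subr_ge0 ler_pdivrMr ?mulr_gt0 // mulrCA mulrA.
Qed.

Lemma quad_ge0_lin_eq0 (R : realFieldType) (B Q : R) : 0 <= Q ->
  (forall t, 0 <= t * B + t ^+ 2 * Q) -> B = 0.
Proof.
move=> Q_ge0 pos; have := @quad_discr _ 0 B Q Q_ge0; rewrite mulr0 mul0r => disc.
apply/eqP; rewrite -sqrf_eq0 eq_le sqr_ge0 andbT disc // => t.
by rewrite add0r.
Qed.

Section CauchySchwarz.
Variable R : realType.
Local Notation C := R[i].
Implicit Types (a b : nat -> C) (t : R).

(* twice the real part of the inner product of [a] and [b] *)
Definition h2polar a b : R :=
  h2sqnorm (fun k => a k + b k) - h2sqnorm a - h2sqnorm b.

Lemma h2sqnorm_addZ a b t : H2 a -> H2 b ->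
  h2sqnorm (fun k => a k + t%:C * b k) =
  h2sqnorm a + t * h2polar a b + t ^+ 2 * h2sqnorm b.
Proof.
move=> ha hb; have hab := H2D ha hb.
pose u k := cabs2 (a k); pose v k := cabs2 (b k); pose w k := cabs2 (a k + b k).
have -> : h2sqnorm (fun k => a k + t%:C * b k) =
    limn (series (u + (t *: (w - u - v) + t ^+ 2 *: v))).
  by congr (limn (series _)); apply/funext => k; rewrite cabs2_addZ -addrA.
have wuv : cvgn (series (w - u - v)) := is_cvg_seriesB (is_cvg_seriesB hab ha) hb.
have c1 : cvgn (series (t *: (w - u - v))) := is_cvg_seriesZ (k := t) wuv.
have c2 : cvgn (series (t ^+ 2 *: v)) := is_cvg_seriesZ (k := t ^+ 2) hb.
rewrite (lim_seriesD ha (is_cvg_seriesD c1 c2)) (lim_seriesD c1 c2).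
rewrite (lim_seriesZ t wuv) (lim_seriesZ (t ^+ 2) hb).
by rewrite (lim_seriesB (is_cvg_seriesB hab ha) hb) (lim_seriesB hab ha) addrA.
Qed.

Lemma h2polar_le a b : H2 a -> H2 b -> h2polar a b <= 2 * (h2norm a * h2norm b).
Proof.
move=> ha hb.
have disc : h2polar a b ^+ 2 <= 4 * h2sqnorm a * h2sqnorm b.
  apply: quad_discr (h2sqnorm_ge0 hb) _ => t.
  by rewrite -h2sqnorm_addZ //; apply/h2sqnorm_ge0/H2D/H2Z.
apply: le_trans (ler_norm _) _; rewrite -sqrtr_sqr -[2 * _]ger0_norm; last first.
  by rewrite mulr_ge0 // mulr_ge0 // h2norm_ge0.
rewrite -sqrtr_sqr ler_sqrt ?sqr_ge0 //.
by rewrite exprMn exprMn !sqr_h2norm //; lra.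
Qed.

Lemma h2normD a b : H2 a -> H2 b -> h2norm (fun k => a k + b k) <= h2norm a + h2norm b.
Proof.
move=> ha hb; rewrite h2normE -[leRHS]ger0_norm ?addr_ge0 ?h2norm_ge0 // -sqrtr_sqr.
rewrite ler_sqrt ?sqr_ge0 // sqrrD !sqr_h2norm //.
have := h2polar_le ha hb; rewrite /h2polar mulr2n; lra.
Qed.

Lemma h2normB a b : H2 a -> H2 b -> h2norm (fun k => a k - b k) <= h2norm a + h2norm b.
Proof. by move=> ha hb; rewrite -(h2normN b); apply: h2normD ha (H2N hb). Qed.

Lemma h2norm_dist a b : H2 a -> H2 b ->
  `|h2norm a - h2norm b| <= h2norm (fun k => a k - b k).
Proof.
move=> ha hb; have le_sub (x y : nat -> C) : H2 x -> H2 y ->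
    h2norm x <= h2norm (fun k => x k - y k) + h2norm y.
  move=> hx hy; rewrite (eq_h2norm (a := x) (b := fun k => (x k - y k) + y k)).
    by apply: h2normD (H2B hx hy) hy.
  by move=> k; rewrite subrK.
have := le_sub _ _ ha hb; have := le_sub _ _ hb ha; rewrite h2normBC.
by rewrite ler_norml; lra.
Qed.

Lemma H2_sum (I : Type) (r : seq I) (F : I -> nat -> C) :
  (forall i, H2 (F i)) -> H2 (fun k => \sum_(i <- r) F i k).
Proof.
move=> hF; elim: r => [|i r IHr].
  by apply: (eq_H2 _ (H2Z (c := 0) H2_delta0)) => k; rewrite big_nil mul0r.
by apply: (eq_H2 _ (H2D (hF i) IHr)) => k; rewrite big_cons.
Qed.

Lemma h2norm_sum_le (I : Type) (r : seq I) (F : I -> nat -> C) :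
  (forall i, H2 (F i)) ->
  h2norm (fun k => \sum_(i <- r) F i k) <= \sum_(i <- r) h2norm (F i).
Proof.
move=> hF; elim: r => [|i r IHr].
  by rewrite big_nil (eq_h2norm (b := fun=> 0)) ?h2norm0 // => k; rewrite big_nil.
rewrite big_cons (eq_h2norm (b := fun k => F i k + \sum_(j <- r) F j k)) => [|k].
  by apply: le_trans (h2normD (hF i) (H2_sum (r := r) hF)) _; rewrite lerD2l.
by rewrite big_cons.
Qed.

End CauchySchwarz.

Section PolySeqProduct.
Variable R : realType.
Local Notation C := R[i].
Implicit Types (a b : nat -> C) (c : C) (p q : {poly C}).

Definition conv p a k : C := \sum_(i < k.+1) p`_i * a (k - i)%N.

Lemma res_coefE p a k : res_coef p a k = conv p a k - delta0 k.
Proof. by []. Qed.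

Definition l1norm p : R := \sum_(i < size p) normc p`_i.

Lemma l1norm_ge0 p : 0 <= l1norm p.
Proof. by rewrite sumr_ge0 // => i _; apply: normc_ge0. Qed.

Lemma normc_coef_le_l1norm p i : normc p`_i <= l1norm p.
Proof.
have [ip|pi] := ltnP i (size p); last first.
  by rewrite nth_default // (_ : normc _ = 0) ?l1norm_ge0 //; exact: normc0.
rewrite /l1norm (bigD1 (Ordinal ip)) //= lerDl.
by rewrite sumr_ge0 // => j _; apply: normc_ge0.
Qed.

Lemma conv_shift p a k : conv p a k = \sum_(i < size p) p`_i * seq_shift i a k.
Proof.
rewrite /conv (big_ord_widen (k.+1 + size p) (fun i => p`_i * a (k - i)%N)) ?leq_addr //.
rewrite (big_ord_widen (k.+1 + size p) (fun i => p`_i * seq_shift i a k)) ?leq_addl //.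
rewrite big_mkcond [RHS]big_mkcond; apply: eq_bigr => i _.
have [ip|pi] := ltnP i (size p); last by rewrite nth_default // !mul0r; case: ifP.
by rewrite /seq_shift ltnS; case: (i <= k)%N; rewrite ?mulr0.
Qed.

Lemma H2_conv p a : H2 a -> H2 (conv p a).
Proof.
move=> ha; apply: (eq_H2 _ (H2_sum (r := index_enum 'I_(size p))
  (F := fun i k => p`_i * seq_shift i a k) _)) => [k|i].
  by rewrite conv_shift.
exact/H2Z/H2_shift.
Qed.

Lemma h2norm_conv_le p a : H2 a -> h2norm (conv p a) <= l1norm p * h2norm a.
Proof.
move=> ha; rewrite (eq_h2norm (b := fun k => \sum_(i < size p) p`_i * seq_shift i a k)).
  apply: le_trans (h2norm_sum_le _ _) _ => [i|]; first exact/H2Z/H2_shift.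
  rewrite /l1norm mulr_suml; apply: ler_sum => i _.
  by rewrite h2normZ ?h2norm_shift //; exact: H2_shift.
by move=> k; rewrite conv_shift.
Qed.

Lemma H2_res p a : H2 a -> H2 (res_coef p a).
Proof. by move=> ha; apply: H2B (H2_conv (p := p) ha) H2_delta0. Qed.

Lemma h2norm_res_le p a : H2 a -> h2norm (res_coef p a) <= l1norm p * h2norm a + 1.
Proof.
move=> ha; apply: le_trans (h2normB (H2_conv (p := p) ha) H2_delta0) _.
by rewrite h2norm_delta0 lerD2r h2norm_conv_le.
Qed.

Lemma h2norm_conv_le_res p a : H2 a -> h2norm (conv p a) <= h2norm (res_coef p a) + 1.
Proof.
move=> ha; rewrite -h2norm_delta0 (eq_h2norm (b := fun k => res_coef p a k + delta0 k)).
  exact: h2normD (H2_res (p := p) ha) H2_delta0.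
by move=> k; rewrite res_coefE subrK.
Qed.

Lemma h2norm_res0 a : h2norm (res_coef 0 a) = 1.
Proof.
rewrite -h2norm_delta0 -h2normN; apply: eq_h2norm => k.
by rewrite res_coefE /conv big1 ?sub0r ?opprK // => i _; rewrite coef0 mul0r.
Qed.

Lemma convD p q a k : conv (p + q) a k = conv p a k + conv q a k.
Proof. by rewrite /conv -big_split; apply: eq_bigr => i _; rewrite coefD mulrDl. Qed.

Lemma convB p q a k : conv (p - q) a k = conv p a k - conv q a k.
Proof. by rewrite /conv -sumrB; apply: eq_bigr => i _; rewrite coefB mulrBl. Qed.

Lemma convZ c p a k : conv (c *: p) a k = c * conv p a k.
Proof. by rewrite /conv mulr_sumr; apply: eq_bigr => i _; rewrite coefZ mulrA. Qed.

Lemma conv_seqB p a b k : conv p (fun k => a k - b k) k = conv p a k - conv p b k.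
Proof. by rewrite /conv -sumrB; apply: eq_bigr => i _; rewrite mulrBr. Qed.

(* the coefficient at the sum of the orders of [p] and [a] is the product of their lowest terms *)
Lemma conv_neq0 p a : p != 0 -> (exists k, a k != 0) -> exists k, conv p a k != 0.
Proof.
move=> p_neq0 a_neq0.
have /ex_minnP[i pi_neq0 min_i] : exists i, p`_i != 0.
  by exists (size p).-1; rewrite -lead_coefE lead_coef_eq0.
have [j aj_neq0 min_j] := ex_minnP a_neq0.
have ij : (i < (i + j).+1)%N by rewrite ltnS leq_addr.
exists (i + j)%N; rewrite /conv (bigD1 (Ordinal ij)) //= addKn big1 ?addr0.
  exact: mulf_neq0.
move=> l l_neq_i; have [li|il] := ltnP l i.
  suff -> : p`_l = 0 by rewrite mul0r.
  by apply/eqP; apply: contraTT li => /min_i; rewrite -leqNgt.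
have {}il : (i < l)%N.
  by rewrite ltn_neqAle il andbT eq_sym; apply: contra l_neq_i => /eqP li; apply/eqP/val_inj.
suff -> : a (i + j - l)%N = 0 by rewrite mulr0.
apply/eqP; apply: contraTT il => /min_j; rewrite -leqNgt leq_subRL ?leq_add2r //.
by rewrite -ltnS ltn_ord.
Qed.

End PolySeqProduct.

Lemma size_polyD_le (S : nzRingType) (N : nat) (p q : {poly S}) :
  (size p <= N)%N -> (size q <= N)%N -> (size (p + q)%R <= N)%N.
Proof. by move=> sp sq; apply: leq_trans (size_polyD _ _) _; rewrite geq_max sp. Qed.

Lemma size_polyB_le (S : nzRingType) (N : nat) (p q : {poly S}) :
  (size p <= N)%N -> (size q <= N)%N -> (size (p - q)%R <= N)%N.
Proof. by move=> sp sq; apply: size_polyD_le; rewrite ?size_polyN. Qed.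

Section OptimalApproximant.
Variables (R : realType) (n : nat).
Local Notation C := R[i].
Implicit Types (f : nat -> C) (p q r : {poly C}).

Lemma is_opa_size f q : is_opa n f q -> (size q <= n.+1)%N.
Proof. by case. Qed.

Lemma is_opa_le f q p : is_opa n f q -> (size p <= n.+1)%N ->
  h2norm (res_coef q f) <= h2norm (res_coef p f).
Proof. by case=> _; apply. Qed.

Lemma is_opa_conv_le2 f q : H2 f -> is_opa n f q -> h2norm (conv q f) <= 2.
Proof.
move=> hf hq; apply: le_trans (h2norm_conv_le_res q hf) _.
have := is_opa_le (p := 0) hq; rewrite size_poly0 h2norm_res0 => /(_ isT); lra.
Qed.

(* [q] minimises [t |-> h2sqnorm (res_coef (q + t (r - q)) f)], a real quadratic in [t]
   whose linear coefficient is therefore zero *)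
Lemma is_opa_pythagoras f q r : H2 f -> is_opa n f q -> (size r <= n.+1)%N ->
  h2sqnorm (res_coef r f) = h2sqnorm (res_coef q f) + h2sqnorm (conv (r - q) f).
Proof.
move=> hf hq sr; have sq := is_opa_size hq; have srq := size_polyB_le sr sq.
have hres := H2_res (p := q) hf; have hconv := H2_conv (p := r - q) hf.
have line t : h2sqnorm (res_coef (q + t%:C *: (r - q)) f) =
    h2sqnorm (res_coef q f) + t * h2polar (res_coef q f) (conv (r - q) f)
    + t ^+ 2 * h2sqnorm (conv (r - q) f).
  rewrite -h2sqnorm_addZ //; congr h2sqnorm; apply/funext => k.
  by rewrite !res_coefE convD convZ addrAC.
have polar0 : h2polar (res_coef q f) (conv (r - q) f) = 0.
  apply: quad_ge0_lin_eq0 (h2sqnorm_ge0 hconv) _ => t.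
  have sqt : (size (q + t%:C *: (r - q))%R <= n.+1)%N.
    by rewrite size_polyD_le // (leq_trans (size_scale_leq _ _)).
  have := is_opa_le hq sqt; rewrite !h2normE ler_sqrt; last exact/h2sqnorm_ge0/H2_res.
  by rewrite line; lra.
have r_line : r = q + 1%:C *: (r - q) by rewrite rmorph1 scale1r addrC subrK.
by rewrite {1}r_line line polar0 mulr0 addr0 expr1n mul1r.
Qed.

End OptimalApproximant.

Lemma lipschitz_continuous (R : realFieldType) (V W : normedModType R) (F : V -> W)
    (L : R) : 0 <= L -> (forall v w, `|F v - F w| <= L * `|v - w|) -> continuous F.
Proof.
move=> L_ge0 lipF v; apply/(@cvgrPdist_lt _ _ _ (nbhs v) (nbhs_filter v)) => e e_gt0.
apply/nbhs_ballP; exists (e / (L + 1)); first by rewrite /= divr_gt0 //; lra.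
move=> w; rewrite -ball_normE /= => vw; apply: le_lt_trans (lipF v w) _.
apply: le_lt_trans (ler_wpM2l L_ge0 (ltW vw)) _.
by rewrite mulrA ltr_pdivrMr; nra.
Qed.

Lemma bounded_closed_EVT_min (R : realType) (m : nat) (F : 'rV[R]_m -> R)
    (A : set 'rV[R]_m) (r : R) :
  continuous F -> A !=set0 -> closed A -> (forall v, A v -> `|v| <= r) ->
  exists2 c, A c & forall v, A v -> F c <= F v.
Proof.
move=> F_cont A0 A_closed A_le.
have A_bounded : bounded_set A.
  exists r; split => [|M rM v /A_le]; first exact: num_real.
  by move/le_lt_trans/(_ rM)/ltW.
have [c /set_mem Ac c_min] := compact_EVT_min A0 (bounded_closed_compact A_bounded A_closed)
  (continuous_subspaceT F_cont).
by exists c => // v Av; apply: c_min; apply: mem_set.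
Qed.

Section Coordinates.
Variables (R : realType) (n : nat).
Local Notation C := R[i].
Local Notation V := 'rV[R]_(n.+1 + n.+1).
Implicit Types (p : {poly C}) (v w : V) (t : R).

(* A polynomial of degree at most [n] is encoded by the real and imaginary parts of its
   coefficients, in a real coordinate space where bounded closed sets are compact. *)
Definition poly_of_row v : {poly C} :=
  \poly_(i < n.+1) (lsubmx v 0 (inord i) +i* rsubmx v 0 (inord i)).

Definition row_of_poly p : V :=
  row_mx (\row_(i < n.+1) complex.Re p`_i) (\row_(i < n.+1) complex.Im p`_i).

Lemma size_poly_of_row v : (size (poly_of_row v) <= n.+1)%N.
Proof. exact: size_poly. Qed.

Lemma coef_poly_of_row v (i : 'I_n.+1) :
  (poly_of_row v)`_i = lsubmx v 0 i +i* rsubmx v 0 i.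
Proof. by rewrite coef_poly ltn_ord inord_val. Qed.

Lemma row_of_polyK p : (size p <= n.+1)%N -> poly_of_row (row_of_poly p) = p.
Proof.
move=> sp; apply/polyP => i; rewrite coef_poly; case: ltnP => [ni|ni]; last first.
  by rewrite nth_default // (leq_trans sp ni).
by rewrite row_mxKl row_mxKr !mxE inordK //; case: (p`_i).
Qed.

Lemma poly_of_rowB v w : poly_of_row (v - w) = poly_of_row v - poly_of_row w.
Proof.
apply/polyP => i; rewrite coefB !coef_poly; case: ltnP => _; last by rewrite subr0.
by rewrite !linearB !mxE.
Qed.

Lemma poly_of_rowZ t v : poly_of_row (t *: v) = t%:C *: poly_of_row v.
Proof.
apply/polyP => i; rewrite coefZ !coef_poly; case: ltnP => _; last by rewrite mulr0.
by rewrite !linearZ !mxE /=; congr (_ +i* _); ring.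
Qed.

Lemma poly_of_row0 : poly_of_row 0 = 0.
Proof. by rewrite -(subrr 0) poly_of_rowB subrr. Qed.

Lemma normr_le_l1norm v : `|v| <= l1norm (poly_of_row v).
Proof.
rewrite [leLHS]/Num.norm /= mx_normrE; apply/bigmax_leP; split => [|[i j] _ /=].
  exact: l1norm_ge0.
rewrite (ord1 i) -(hsubmxK v) -(splitK j); case: (fintype.split j) => k.
  rewrite row_mxEl; apply: le_trans (normc_coef_le_l1norm _ k).
  by rewrite coef_poly_of_row row_mxKl row_mxKr Re_le_normc.
rewrite row_mxEr; apply: le_trans (normc_coef_le_l1norm _ k).
by rewrite coef_poly_of_row row_mxKl row_mxKr Im_le_normc.
Qed.

Lemma l1norm_le_normr v : l1norm (poly_of_row v) <= 2 * n.+1%:R * `|v|.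
Proof.
have entry_le (j : 'I_(n.+1 + n.+1)) : `|v 0 j| <= `|v|.
  rewrite [leRHS]/Num.norm /= mx_normrE; apply/bigmax_geP; right.
  by exists (ord0, j).
apply: le_trans (_ : \sum_(i < n.+1) 2 * `|v| <= _); last first.
  by rewrite sumr_const card_ord -mulrnAl mulr_natr.
rewrite /l1norm (big_ord_widen n.+1 (fun i => normc (poly_of_row v)`_i)) ?size_poly_of_row //.
rewrite big_mkcond; apply: ler_sum => i _; case: ifP => _; last first.
  by rewrite mulr_ge0.
rewrite coef_poly_of_row; apply: le_trans (normc_le_ReIm _ _) _.
by rewrite mulr2n mulrDl mul1r lerD // mxE entry_le.
Qed.

End Coordinates.

Section Existence.
Variables (R : realType) (n : nat).
Local Notation C := R[i].
Local Notation V := 'rV[R]_(n.+1 + n.+1).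
Implicit Types (g : nat -> C) (p q : {poly C}) (v w : V).

Lemma l1norm0 : l1norm (0 : {poly C}) = 0.
Proof. by rewrite /l1norm size_poly0 big_ord0. Qed.

Lemma h2norm_convZ (t : R) p g : H2 g ->
  h2norm (conv (t%:C *: p) g) = `|t| * h2norm (conv p g).
Proof.
move=> hg; rewrite -normcR -h2normZ; last exact: H2_conv.
by apply: eq_h2norm => k; rewrite convZ.
Qed.

Lemma res_coefB p q g k : res_coef p g k - res_coef q g k = conv (p - q) g k.
Proof. by rewrite !res_coefE convB opprB addrA subrK. Qed.

Lemma continuous_h2norm_conv g : H2 g ->
  continuous (fun v : V => h2norm (conv (poly_of_row v) g)).
Proof.
move=> hg; apply: (@lipschitz_continuous _ _ _ _ (2 * n.+1%:R * h2norm g)) => [|v w].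
  by rewrite !mulr_ge0 ?h2norm_ge0.
apply: le_trans (h2norm_dist (H2_conv hg) (H2_conv hg)) _.
rewrite (eq_h2norm (b := conv (poly_of_row (v - w)) g)) => [|k]; last first.
  by rewrite poly_of_rowB convB.
apply: le_trans (h2norm_conv_le _ hg) _.
by rewrite mulrAC ler_wpM2r ?h2norm_ge0 ?l1norm_le_normr.
Qed.

Lemma continuous_h2norm_res g : H2 g ->
  continuous (fun v : V => h2norm (res_coef (poly_of_row v) g)).
Proof.
move=> hg; apply: (@lipschitz_continuous _ _ _ _ (2 * n.+1%:R * h2norm g)) => [|v w].
  by rewrite !mulr_ge0 ?h2norm_ge0.
apply: le_trans (h2norm_dist (H2_res hg) (H2_res hg)) _.
rewrite (eq_h2norm (b := conv (poly_of_row (v - w)) g)) => [|k]; last first.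
  by rewrite poly_of_rowB res_coefB.
apply: le_trans (h2norm_conv_le _ hg) _.
by rewrite mulrAC ler_wpM2r ?h2norm_ge0 ?l1norm_le_normr.
Qed.

Lemma closed_normr_eq (r : R) : closed [set v : V | `|v| = r].
Proof.
rewrite -[X in closed X]/(Num.norm @^-1` [set x : R | x = r]).
by apply: preimage_closed => [v _|]; [exact: norm_continuous | exact: closed_eq].
Qed.

Lemma closed_normr_le (r : R) : closed [set v : V | `|v| <= r].
Proof.
rewrite -[X in closed X]/(Num.norm @^-1` [set x : R | x <= r]).
by apply: preimage_closed => [v _|]; [exact: norm_continuous | exact: closed_le].
Qed.

(* minimise over the unit sphere of the coordinate space, then rescale *)
Lemma h2norm_conv_coercive g : H2star g ->
  exists2 m, 0 < m & forall p, (size p <= n.+1)%N -> m * l1norm p <= h2norm (conv p g).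
Proof.
case=> hg g_neq0; pose F v := h2norm (conv (poly_of_row v) g).
have [c c1 c_min] : exists2 c, `|c| = 1 & forall v, `|v| = 1 -> F c <= F v.
  apply: (bounded_closed_EVT_min (r := 1) (continuous_h2norm_conv hg)) => [||v ->] //.
    pose w : V := const_mx 1; have w_neq0 : w != 0.
      by apply/eqP => /matrixP /(_ ord0 (lshift _ ord0)); rewrite !mxE; apply/eqP/oner_neq0.
    by exists (`|w|^-1 *: w); rewrite /= normrZ ger0_norm ?invr_ge0 // mulVf ?normr_eq0.
  exact: closed_normr_eq.
have Fc_gt0 : 0 < F c.
  apply: h2norm_gt0 (H2_conv hg) (conv_neq0 _ g_neq0).
  by apply: (contraTneq _ (normr_le_l1norm c)) => ->; rewrite c1 l1norm0 -ltNge ltr01.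
have N_gt0 : 0 < 2 * n.+1%:R :> R by rewrite mulr_gt0 // ltr0n.
exists (F c / (2 * n.+1%:R)); first by rewrite divr_gt0.
move=> p sp; rewrite -(row_of_polyK sp); set v := row_of_poly n p.
have [->|v_neq0] := eqVneq v 0; first by rewrite poly_of_row0 l1norm0 mulr0 h2norm_ge0.
have v_gt0 : 0 < `|v| by rewrite normr_gt0.
have : F c <= F (`|v|^-1 *: v).
  by apply: c_min; rewrite normrZ ger0_norm ?invr_ge0 // mulVf ?normr_eq0.
rewrite /F poly_of_rowZ h2norm_convZ // ger0_norm ?invr_ge0 // -/(F v) ler_pdivlMl // => Fcv.
apply: le_trans Fcv; rewrite -mulrA mulrC ler_wpM2r ?(ltW Fc_gt0) //.
by rewrite ler_pdivrMl // l1norm_le_normr.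
Qed.

Lemma opa_exists g : H2star g -> exists q, is_opa n g q.
Proof.
move=> gs; have hg := gs.1; have [m m_gt0 coercive] := h2norm_conv_coercive gs.
pose G v := h2norm (res_coef (poly_of_row v) g).
have r_ge0 : 0 <= 3 / m by rewrite divr_ge0 // ltW.
have [c _ c_min] : exists2 c, `|c| <= 3 / m & forall v, `|v| <= 3 / m -> G c <= G v.
  apply: (bounded_closed_EVT_min (r := 3 / m) (continuous_h2norm_res hg)) => [||v //].
    by exists 0; rewrite /= normr0.
  exact: closed_normr_le.
have Gc_le1 : G c <= 1.
  by have := c_min 0; rewrite normr0 /G poly_of_row0 h2norm_res0; apply.
exists (poly_of_row c); split => [|p sp]; first exact: size_poly_of_row.
rewrite -(row_of_polyK sp); set v := row_of_poly n p.
have [v_le|v_gt] := leP `|v| (3 / m); first exact: c_min.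
apply: le_trans Gc_le1 _.
have := h2norm_conv_le_res (poly_of_row v) hg.
have := coercive _ (size_poly_of_row v).
have : m * `|v| <= m * l1norm (poly_of_row v) by rewrite ler_wpM2l ?normr_le_l1norm // ltW.
have : 3 < m * `|v| by rewrite mulrC -ltr_pdivrMr.
rewrite /G; lra.
Qed.

Lemma Qn_is_opa g : H2star g -> is_opa n g (Qn n g).
Proof. by move=> gs; apply: xgetPex (opa_exists gs). Qed.

End Existence.

Section Stability.
Variables (R : realType) (n : nat).
Local Notation C := R[i].
Implicit Types (f g : nat -> C) (p q r : {poly C}).

Lemma h2norm_conv_le_dist r f g : H2 f -> H2 g ->
  h2norm (conv r g) <= h2norm (conv r f) + l1norm r * h2norm (fun k => g k - f k).
Proof.
move=> hf hg; have hgf := H2B hg hf.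
rewrite (eq_h2norm (b := fun k => conv r f k + conv r (fun k => g k - f k) k)).
  by apply: le_trans (h2normD (H2_conv hf) (H2_conv hgf)) _; rewrite lerD2l h2norm_conv_le.
by move=> k; rewrite conv_seqB addrC subrK.
Qed.

Lemma is_opa_l1norm_le f g m p : H2 f -> H2 g -> 0 < m ->
  (forall p, (size p <= n.+1)%N -> m * l1norm p <= h2norm (conv p f)) ->
  h2norm (fun k => g k - f k) <= m / 2 -> is_opa n g p -> l1norm p <= 4 / m.
Proof.
move=> hf hg m_gt0 coercive d_le hp.
have := coercive _ (is_opa_size hp); have := h2norm_conv_le_dist p hg hf.
rewrite h2normBC; have := is_opa_conv_le2 hg hp.
have := ler_wpM2l (l1norm_ge0 p) d_le; rewrite ler_pdivlMr //; nra.
Qed.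

Lemma h2sqnorm_res_dist r f g (P : R) : H2 f -> H2 g -> l1norm r <= P ->
  h2norm (fun k => g k - f k) <= 1 ->
  `|h2sqnorm (res_coef r f) - h2sqnorm (res_coef r g)| <=
  P * h2norm (fun k => g k - f k) * (2 * (P * h2norm f + 1) + P).
Proof.
move=> hf hg lr; set d := h2norm _ => d_le1.
set A := h2norm (res_coef r f); set B := h2norm (res_coef r g).
have hrf := H2_res (p := r) hf; have hrg := H2_res (p := r) hg.
have [l_ge0 d_ge0] : 0 <= l1norm r /\ 0 <= d by split; [exact: l1norm_ge0 | exact: h2norm_ge0].
have [A_ge0 B_ge0] : 0 <= A /\ 0 <= B by split; exact: h2norm_ge0.
have AB : `|A - B| <= l1norm r * d.
  apply: le_trans (h2norm_dist hrf hrg) _; rewrite h2normBC.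
  rewrite (eq_h2norm (b := conv r (fun k => g k - f k))); first exact: h2norm_conv_le (H2B hg hf).
  by move=> k; rewrite !res_coefE conv_seqB opprB addrA subrK.
have A_le : A <= l1norm r * h2norm f + 1 := h2norm_res_le r hf.
have ld_le : l1norm r * d <= P * d by apply: ler_wpM2r.
have lf_le : l1norm r * h2norm f <= P * h2norm f by apply/ler_wpM2r/lr/h2norm_ge0.
have := ler_piMr l_ge0 d_le1.
rewrite -(sqr_h2norm hrf) -(sqr_h2norm hrg) -/A -/B.
have -> : A ^+ 2 - B ^+ 2 = (A - B) * (A + B) by ring.
rewrite normrM [`|A + B|]ger0_norm ?addr_ge0 // => ld_le_l.
apply: ler_pM; rewrite ?addr_ge0 //; first exact: le_trans AB ld_le.
by move: AB; rewrite ler_norml => /andP[AB _]; lra.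
Qed.

(* Pythagoras for [f] at its optimum [q], and optimality of [p] for [g] *)
Lemma is_opa_h2sqnorm_convB_le f g p q : H2 f -> H2 g -> is_opa n f q -> is_opa n g p ->
  h2sqnorm (conv (p - q) f) <=
  `|h2sqnorm (res_coef p f) - h2sqnorm (res_coef p g)|
  + `|h2sqnorm (res_coef q f) - h2sqnorm (res_coef q g)|.
Proof.
move=> hf hg hq hp.
have pyth_f := is_opa_pythagoras hf hq (is_opa_size hp).
have pyth_g := is_opa_pythagoras hg hp (is_opa_size hq).
have := h2sqnorm_ge0 (H2_conv (p := q - p) hg).
have := ler_norm (h2sqnorm (res_coef p f) - h2sqnorm (res_coef p g)).
have := ler_norm (h2sqnorm (res_coef q g) - h2sqnorm (res_coef q f)).
rewrite distrC; lra.
Qed.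

End Stability.

Section Evaluation.
Variable R : realType.
Local Notation C := R[i].

Lemma normc_horner_le (N : nat) (p : {poly C}) (z : C) (M : R) :
  (size p <= N.+1)%N -> 1 <= M -> normc z <= M -> normc p.[z] <= l1norm p * M ^+ N.
Proof.
move=> sp M_ge1 zM; rewrite horner_coef; apply: le_trans (normc_sum_le _ _) _.
rewrite /l1norm mulr_suml; apply: ler_sum => i _; rewrite normcM normcX.
apply: ler_wpM2l; first exact: normc_ge0.
apply: le_trans (lerXn2r _ _ _ zM) _; rewrite ?nnegrE ?normc_ge0 ?(le_trans ler01) //.
by rewrite ler_weXn2l // -ltnS (leq_trans (ltn_ord i)).
Qed.

Lemma compact_normc_bounded (K : set C^o) : compact K ->
  exists2 M : R, 1 <= M & forall z, K z -> normc z <= M.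
Proof.
rewrite compact_cover => K_cover.
have cover : K `<=` \bigcup_(k in [set: nat]) ball (0 : C^o) k%:R.
  move=> z _; exists (Num.truncn (normc z)).+1 => //.
  by rewrite -ball_normE /= sub0r normrN normcE -(rmorph_nat (real_complex R)) ltcR truncnS_gt.
have [D _ DK] := K_cover nat [set: nat] _ (fun k _ => ball_open _ _) cover.
exists ((\max_(k <- finmap.enum_fset D) k)%:R + 1); first by rewrite lerDr.
move=> z /DK[k kD]; rewrite -ball_normE /= sub0r normrN normcE -(rmorph_nat (real_complex R)) ltcR => /ltW zk.
have : (k <= \max_(i <- finmap.enum_fset D) i)%N by apply: (@leq_bigmax_seq _ _ xpredT id).
by rewrite -(ler_nat R); lra.
Qed.

End Evaluation.

Lemma Qn_l1norm_holder (R : realType) (n : nat) (f : nat -> R[i]) : H2star f ->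
  exists2 c : R, 0 < c & exists2 delta : R, 0 < delta &
  forall g, H2star g -> h2norm (fun k => g k - f k) < delta ->
    l1norm (Qn n g - Qn n f) ^+ 2 <= c * h2norm (fun k => g k - f k).
Proof.
move=> fs; have hf := fs.1; have [m m_gt0 coercive] := h2norm_conv_coercive n fs.
set P := 4 / m; have P_gt0 : 0 < P by rewrite divr_gt0.
set W := 2 * (P * h2norm f + 1) + P.
have W_gt0 : 0 < W by rewrite ltr_pwDr // mulr_ge0 // addr_ge0 // mulr_ge0 ?h2norm_ge0 // ltW.
exists (2 * P * W / m ^+ 2); first by rewrite !mulr_gt0 // ?invr_gt0 ?exprn_gt0.
exists (Num.min (m / 2) 1); first by rewrite lt_min divr_gt0 // ltr01.
move=> g gs; have hg := gs.1; set d := h2norm _; rewrite lt_min => /andP[d_lt d_lt1].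
have := Qn_is_opa n gs; have := Qn_is_opa n fs.
move: (Qn n f) (Qn n g) => q p hq hp.
have lp : l1norm p <= P := is_opa_l1norm_le hf hg m_gt0 coercive (ltW d_lt) hp.
have ff_le : h2norm (fun k => f k - f k) <= m / 2.
  by rewrite (eq_h2norm (b := fun _ => 0)) ?h2norm0 ?divr_ge0 ?ltW // => k; rewrite subrr.
have lq : l1norm q <= P := is_opa_l1norm_le hf hf m_gt0 coercive ff_le hq.
have mS : (m * l1norm (p - q)) ^+ 2 <= h2sqnorm (conv (p - q) f).
  rewrite -sqr_h2norm; last exact: H2_conv.
  apply: lerXn2r;
    rewrite ?nnegrE ?h2norm_ge0 ?mulr_ge0 ?l1norm_ge0 ?(ltW m_gt0) //.
  exact/coercive/size_polyB_le/is_opa_size/hq/is_opa_size/hp.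
have key : (m * l1norm (p - q)) ^+ 2 <= 2 * (P * d * W).
  have := is_opa_h2sqnorm_convB_le hf hg hq hp.
  have := h2sqnorm_res_dist hf hg lp (ltW d_lt1).
  have := h2sqnorm_res_dist hf hg lq (ltW d_lt1); rewrite -/d -/W; lra.
rewrite (_ : 2 * P * W / m ^+ 2 * d = 2 * (P * d * W) / m ^+ 2); last by ring.
by rewrite ler_pdivlMr ?exprn_gt0 // mulrC -exprMn.
Qed.

Theorem proposition2p1 (R : realType) (n : nat) (K : set (R[i])^o) (hK : compact K) :
  forall f : nat -> R[i], H2star f ->
  forall eps : R, 0 < eps ->
  exists delta : R, 0 < delta /\
    forall g : nat -> R[i], H2star g ->
      h2norm (fun k => g k - f k) < delta ->
      forall z : R[i], K z ->
        `|(Qn n g).[z] - (Qn n f).[z]| < eps%:C.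
Proof.
move=> f fs eps eps_gt0.
have [c c_gt0 [delta0 delta0_gt0 holder]] := Qn_l1norm_holder n fs.
have [M M_ge1 KM] := compact_normc_bounded hK.
have e_gt0 : 0 < eps / M ^+ n by rewrite divr_gt0 // exprn_gt0 // (lt_le_trans ltr01).
exists (Num.min delta0 ((eps / M ^+ n) ^+ 2 / c)).
split=> [|g gs]; first by rewrite lt_min delta0_gt0 !divr_gt0 // exprn_gt0.
rewrite lt_min => /andP[d_lt0 d_lt] z Kz.
have l1_lt : l1norm (Qn n g - Qn n f) < eps / M ^+ n.
  rewrite -(@ltr_pXn2r _ 2) ?nnegrE ?l1norm_ge0 ?ltW //.
  by apply: le_lt_trans (holder g gs d_lt0) _; rewrite mulrC -ltr_pdivlMr.
rewrite normcE ltcR -hornerN -hornerD.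
apply: le_lt_trans (normc_horner_le _ M_ge1 (KM z Kz)) _.
  exact/size_polyB_le/is_opa_size/Qn_is_opa/fs/is_opa_size/Qn_is_opa/gs.
by rewrite -ltr_pdivlMr // exprn_gt0 // (lt_le_trans ltr01).
Qed.
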